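(* With the model and matrices $V(z),U(z)$ as in the context, let $\hat V(z),\hat U(z)$ be the $(s+1)\times(s+1)$ matrices that coincide with $V(z),U(z)$ in columns $0,\dots,s-1$, and whose last column (column $s$) is \[ \hat V_{i,s}=1\ (0\le i<s),\quad \hat V_{s,s}=\bar\alpha;\qquad \hat U_{i,s}=\tilde\lambda\tilde p_a+i\tilde\theta\tilde\mu\ (0\le i<s),\quad \hat U_{s,s}=\tilde\lambda_{ob}+s\tilde\theta\tilde\mu . \] Then for any open set $\Omega\subseteq\mathbb{C}\setminus\{1\}$ and any differentiable row-vector function $\mathbf p:\Omega\to\mathbb{C}^{s+1}$, $\mathbf p'V=\mathbf pU$ on $\Omega$ if and only if $\mathbf p'\hat V=\mathbf p\hat U$ on $\Omega$. In particular the stationary generating function $\mathbf p(z)$ satisfies $\mathbf p'(z)\hat V(z)=\mathbf p(z)\hat U(z)$ for $|z|<1$; equivalently, \[ \sum_{i=0}^{s-1}p_i'(z)+\bar\alpha p_s'(z)=\sum_{i=0}^{s-1}(\tilde\lambda\tilde p_a+i\tilde\theta\tilde\mu)p_i(z)+(\tilde\lambda_{ob}+s\tilde\theta\tilde\mu)p_s(z) \] together with the first $s$ scalar equations of $\mathbf p'V=\mathbf pU$.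
   Context: Parameters: integer $s\ge1$, $\lambda,\mu,\nu>0$, $p_a,\tilde p_a\ge0$ with $p_a+\tilde p_a=1$, $\tilde\alpha_0\in[0,1]$, $p\in[0,1]$, $\bar p=1-p$, $\bar\alpha\in[0,1]$, $\bar\theta,\tilde\theta\ge0$; $\lambda_{ob}=\lambda\tilde\alpha_0$, $\tilde\lambda=\lambda/\nu$, $\tilde\mu=\mu/\nu$, $\tilde\lambda_{ob}=\lambda_{ob}/\nu$. $V(z),U(z)$ are the $(s+1)\times(s+1)$ matrices (indices $0..s$, other entries zero): $V_{i,i}=z-\bar p$, $V_{i,i+1}=-p$ for $i<s$, $V_{s,s}=\bar\alpha(z-1)$; $U_{i,i+1}=\tilde\lambda p_a$ for $i<s$, $U_{i,i-1}=i\tilde\mu(\bar\theta+\tilde\theta z)$ for $1\le i\le s$, $U_{i,i}=\tilde\lambda(z\tilde p_a-1)-i\tilde\mu(\bar\theta+\tilde\theta)$ for $i<s$, $U_{s,s}=\tilde\lambda_{ob}(z-1)-s\tilde\mu(\bar\theta+\tilde\theta)$. The ''stationary generating function'' is $\mathbf p(z)=(p_0,\dots,p_s)$, $p_i(z)=\sum_j\pi_{i,j}z^j$, of the stationary distribution (assumed to exist) of the Markovian multiserver retrial QBD whose level-up block is $A$ ($A_{i,i}=\lambda\tilde p_a$ for $i<s$, $A_{s,s}=\lambda\tilde\alpha_0$, $A_{i,i-1}=i\mu\tilde\theta$), level-$j$ down block $jC$ ($C_{i,i}=\nu\bar p$, $C_{i,i+1}=\nu p$ for $i<s$, $C_{s,s}=\nu\bar\alpha$),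 and diagonal block $B-\tilde A-j\tilde C$ ($B_{i,i+1}=\lambda p_a$, $B_{i,i-1}=i\mu\bar\theta$, rows of $B$ sum to 0; $\tilde A,\tilde C$ diagonal row-sum matrices); it satisfies $\mathbf p'V=\mathbf pU$ on $|z|<1$. *)

(* Complex numbers are modelled by an arbitrary
   numClosedFieldType C (e.g. algC, or any R[i]). *)
From HB Require Import structures.
From mathcomp Require Import all_boot all_order all_algebra.
Set Implicit Arguments. Unset Strict Implicit. Unset Printing Implicit Defensive.
Import Order.TTheory GRing.Theory Num.Theory.
Local Open Scope ring_scope.

Section Defs.
Variable C : numClosedFieldType.

Definition is_open (Om : C -> Prop) : Prop :=
  forall z, Om z -> exists2 r : C, 0 < r & forall w, `|w - z| < r -> Om w.

Definition has_derivative_at (Om : C -> Prop) (f : C -> C) (l z : C) : Prop :=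
  forall eps : C, 0 < eps -> exists2 d : C, 0 < d &
    forall h : C, 0 < `|h| -> `|h| < d -> Om (z + h) ->
      `|(f (z + h) - f z) / h - l| < eps.

Definition is_deriv_rV (n : nat) (Om : C -> Prop) (p dp : C -> 'rV[C]_n) : Prop :=
  forall z, Om z -> forall j : 'I_n, has_derivative_at Om (fun w => p w 0 j) (dp z 0 j) z.

(* V(z); indices 0..s, pbar = 1 - p. *)
Definition Vmat (s : nat) (p abar z : C) : 'M[C]_(s.+1) :=
  \matrix_(i < s.+1, j < s.+1)
    if (i < s)%N then
      (if j == i :> nat then z - (1 - p)
       else if j == i.+1 :> nat then - p else 0)
    else (if j == s :> nat then abar * (z - 1) else 0).

Definition Umat (s : nat) (lam mu nu pa tpa ta0 thb tht z : C) : 'M[C]_(s.+1) :=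
  let tl := lam / nu in let tm := mu / nu in let tlob := lam * ta0 / nu in
  \matrix_(i < s.+1, j < s.+1)
    if (i < s)%N then
      (if j == i.+1 :> nat then tl * pa
       else if j == i :> nat then tl * (z * tpa - 1) - i%:R * tm * (thb + tht)
       else if j.+1 == i :> nat then i%:R * tm * (thb + tht * z)
       else 0)
    else
      (if j == s :> nat then tlob * (z - 1) - s%:R * tm * (thb + tht)
       else if j.+1 == s :> nat then s%:R * tm * (thb + tht * z)
       else 0).

Definition Vhat (s : nat) (p abar z : C) : 'M[C]_(s.+1) :=
  \matrix_(i < s.+1, j < s.+1)
    if (j < s)%N then Vmat s p abar z i j
    else if (i < s)%N then 1 else abar.

Definition Uhat (s : nat) (lam mu nu pa tpa ta0 thb tht z : C) : 'M[C]_(s.+1) :=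
  let tl := lam / nu in let tm := mu / nu in let tlob := lam * ta0 / nu in
  \matrix_(i < s.+1, j < s.+1)
    if (j < s)%N then Umat s lam mu nu pa tpa ta0 thb tht z i j
    else if (i < s)%N then tl * tpa + i%:R * tht * tm
    else tlob + s%:R * tht * tm.

End Defs.

(* Every row of V(z) sums to (z - 1) times the last entry of the same row of
   hat V(z), and likewise for U(z) and hat U(z) once p_a + tilde p_a = 1 is used.
   Hence hat V = V E and hat U = U E, where right multiplication by E replaces
   the last column by (z - 1)^-1 times the sum of all columns.  For z <> 1 the
   matrix E is invertible (it is triangular with diagonal 1, ..., 1, (z - 1)^-1),
   so p' V = p U and p' hat V = p hat U are equivalent pointwise; the unit disc
   avoids z = 1. *)

From HB Require Import structures.
From mathcomp Require Import all_boot all_order all_algebra ring zify.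
Import Order.TTheory GRing.Theory Num.Theory.
Set Implicit Arguments. Unset Strict Implicit. Unset Printing Implicit Defensive.
Local Open Scope ring_scope.

Section ColumnOperation.
Variables (R : comUnitRingType) (n : nat).

Definition lastcol_sum_mx (c : R) : 'M[R]_n.+1 :=
  \matrix_(i, j) if (j < n)%N then (i == j)%:R else c.

Lemma mul_lastcol_sum_mx m (A : 'M[R]_(m, n.+1)) c :
  A *m lastcol_sum_mx c =
  \matrix_(i, j) if (j < n)%N then A i j else c * \sum_k A i k.
Proof.
apply/matrixP => i j; rewrite !mxE.
case: ifP => jn; last by rewrite mulr_sumr; apply: eq_bigr => k _; rewrite mxE jn mulrC.
rewrite (bigD1 j) //= big1 => [|k nkj]; rewrite mxE jn ?eqxx ?mulr1 ?addr0 //.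
by rewrite (negbTE nkj) mulr0.
Qed.

Lemma lastcol_sum_mx_unit c : c \is a GRing.unit -> lastcol_sum_mx c \in unitmx.
Proof.
move=> cU; rewrite unitmxE -det_tr det_trig.
  rewrite (big_ord_recr n) /= big1 => [|i _]; rewrite !mxE /= ?ltnn ?mul1r //.
  by rewrite ltn_ord eqxx.
apply/is_trig_mxP => i j ij; rewrite !mxE.
case: ifP => [_ | /negbT]; first by case: eqP ij => // ->; rewrite ltnn.
by have := ltn_ord j; lia.
Qed.

Lemma eq_mulmx_lastcol_sum m p (a : 'rV[R]_m) (b : 'rV[R]_p)
    (A : 'M_(m, n.+1)) (B : 'M_(p, n.+1)) c :
  c \is a GRing.unit ->
  a *m A = b *m B <-> a *m (A *m lastcol_sum_mx c) = b *m (B *m lastcol_sum_mx c).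
Proof.
move=> /lastcol_sum_mx_unit EU; rewrite !mulmxA; split => [-> // | E].
by rewrite -[LHS](mulmxK EU) E mulmxK.
Qed.

Lemma lastcol_sum_mxE m (A Ahat : 'M[R]_(m, n.+1)) c :
  c \is a GRing.unit ->
  (forall i (j : 'I_n.+1), (j < n)%N -> Ahat i j = A i j) ->
  (forall i, \sum_k A i k = c * Ahat i ord_max) ->
  Ahat = A *m lastcol_sum_mx c^-1.
Proof.
move=> cU sameA rowsum; rewrite mul_lastcol_sum_mx; apply/matrixP => i j; rewrite mxE.
case: ifP => [/sameA -> // | /negbT]; rewrite -leqNgt => nj.
have -> : j = ord_max by apply/val_inj/eqP; rewrite eqn_leq nj -ltnS ltn_ord.
by rewrite rowsum mulKr.
Qed.
End ColumnOperation.

Lemma sum_ord_indicator (R : nzSemiRingType) n a (x : R) :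
  \sum_(j < n) ((j : nat) == a)%:R * x = if (a < n)%N then x else 0.
Proof.
case: ltnP => [an | na]; last first.
  by rewrite big1 // => j _; rewrite ltn_eqF ?mul0r // (leq_trans (ltn_ord j) na).
rewrite (bigD1 (Ordinal an)) //= eqxx mul1r big1 ?addr0 // => j nja.
by rewrite (_ : (j : nat) == a = false) ?mul0r //; apply: contraNF nja => /eqP ja; apply/eqP/val_inj.
Qed.

Lemma sum_ord_indicatorS (R : nzSemiRingType) n a (x : R) :
  \sum_(j < n) ((j : nat).+1 == a)%:R * x = if (0 < a <= n)%N then x else 0.
Proof.
case: a => [|a]; first by rewrite big1 // => j _; rewrite mul0r.
by under eq_bigr do rewrite eqSS; rewrite sum_ord_indicator.
Qed.

Section Model.
Variables (C : numClosedFieldType) (s : nat) (lam mu nu pa tpa ta0 p abar thb tht : C).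
Hypothesis pa_tpa : pa + tpa = 1.

Local Notation V := (Vmat s p abar).
Local Notation Vh := (Vhat s p abar).
Local Notation U := (Umat s lam mu nu pa tpa ta0 thb tht).
Local Notation Uh := (Uhat s lam mu nu pa tpa ta0 thb tht).

Lemma Vmat_row_sum z i : \sum_j V z i j = (z - 1) * Vh z i ord_max.
Proof.
rewrite mxE /= ltnn; case: ifP => si.
  transitivity (\sum_(j < s.+1) (((j : nat) == i)%:R * (z - (1 - p))
                                + ((j : nat) == i.+1)%:R * - p)).
    apply: eq_bigr => j _; rewrite mxE si.
    by case: eqP => ji; case: eqP => jSi //=; try lia; ring.
  by rewrite big_split /= !sum_ord_indicator ltn_ord ltnS si; ring.
transitivity (\sum_(j < s.+1) ((j : nat) == s)%:R * (abar * (z - 1))).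
  by apply: eq_bigr => j _; rewrite mxE si; case: eqP => _ /=; ring.
by rewrite sum_ord_indicator ltnSn; ring.
Qed.

Lemma Umat_row_sum z i : \sum_j U z i j = (z - 1) * Uh z i ord_max.
Proof.
have -> : pa = 1 - tpa by rewrite -pa_tpa; ring.
rewrite mxE /= ltnn; case: ifP => si.
  transitivity (\sum_(j < s.+1)
     (((j : nat) == i.+1)%:R * (lam / nu * (1 - tpa))
      + ((j : nat) == i)%:R * (lam / nu * (z * tpa - 1) - i%:R * (mu / nu) * (thb + tht))
      + ((j : nat).+1 == i)%:R * (i%:R * (mu / nu) * (thb + tht * z)))).
    apply: eq_bigr => j _; rewrite mxE si.
    by case: eqP => jSi; case: eqP => ji; case: eqP => Sji //=; try lia; ring.
  rewrite !big_split /= !sum_ord_indicator sum_ord_indicatorS ltnS si ltn_ord (leqW (ltnW si)).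
  by case: posnP => [-> | _] /=; ring.
transitivity (\sum_(j < s.+1)
   (((j : nat) == s)%:R * (lam * ta0 / nu * (z - 1) - s%:R * (mu / nu) * (thb + tht))
    + ((j : nat).+1 == s)%:R * (s%:R * (mu / nu) * (thb + tht * z)))).
  apply: eq_bigr => j _; rewrite mxE si.
  by case: eqP => js; case: eqP => Sjs //=; try lia; ring.
rewrite big_split /= sum_ord_indicator sum_ord_indicatorS ltnSn leqnSn andbT.
by case: posnP => [-> | _] /=; ring.
Qed.

Lemma Vhat_lastcol_sum z : z != 1 -> Vh z = V z *m lastcol_sum_mx s (z - 1)^-1.
Proof.
move=> z1; apply: lastcol_sum_mxE; last exact: Vmat_row_sum.
  by rewrite unitfE subr_eq0.
by move=> i j js; rewrite mxE js.
Qed.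

Lemma Uhat_lastcol_sum z : z != 1 -> Uh z = U z *m lastcol_sum_mx s (z - 1)^-1.
Proof.
move=> z1; apply: lastcol_sum_mxE; last exact: Umat_row_sum.
  by rewrite unitfE subr_eq0.
by move=> i j js; rewrite mxE js.
Qed.

Lemma VU_eq_hat z (a b : 'rV[C]_s.+1) :
  z != 1 -> a *m V z = b *m U z <-> a *m Vh z = b *m Uh z.
Proof.
move=> z1; rewrite Vhat_lastcol_sum // Uhat_lastcol_sum //.
by apply: eq_mulmx_lastcol_sum; rewrite unitrV unitfE subr_eq0.
Qed.

Lemma mulmx_Vhat_last z (a : 'rV[C]_s.+1) :
  (a *m Vh z) 0 ord_max = \sum_(i < s) a 0 (widen_ord (leqnSn s) i) + abar * a 0 ord_max.
Proof.
rewrite mxE big_ord_recr /= !mxE /= ltnn mulrC; congr (_ + _).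
by apply: eq_bigr => i _; rewrite !mxE /= ltnn ltn_ord mulr1.
Qed.

Lemma mulmx_Uhat_last z (a : 'rV[C]_s.+1) :
  (a *m Uh z) 0 ord_max =
  \sum_(i < s) (lam / nu * tpa + i%:R * tht * (mu / nu)) * a 0 (widen_ord (leqnSn s) i)
  + (lam * ta0 / nu + s%:R * tht * (mu / nu)) * a 0 ord_max.
Proof.
rewrite mxE big_ord_recr /= !mxE /= ltnn mulrC; congr (_ + _).
by apply: eq_bigr => i _; rewrite !mxE /= ltnn ltn_ord mulrC.
Qed.
End Model.

Theorem lemma5p2 (C : numClosedFieldType) (s : nat) (lam mu nu pa tpa ta0 p abar thb tht : C)
  (hs : (1 <= s)%N) (hlam : 0 < lam) (hmu : 0 < mu) (hnu : 0 < nu)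
  (hpa : 0 <= pa) (htpa : 0 <= tpa) (hpatpa : pa + tpa = 1)
  (hta0 : 0 <= ta0 <= 1) (hp : 0 <= p <= 1) (habar : 0 <= abar <= 1)
  (hthb : 0 <= thb) (htht : 0 <= tht) :
  (forall (Om : C -> Prop), is_open Om -> ~ Om 1 ->
   forall (P dP : C -> 'rV[C]_(s.+1)), is_deriv_rV Om P dP ->
     ((forall z, Om z -> dP z *m Vmat s p abar z = P z *m Umat s lam mu nu pa tpa ta0 thb tht z)
      <->
      (forall z, Om z -> dP z *m Vhat s p abar z = P z *m Uhat s lam mu nu pa tpa ta0 thb tht z)))
  /\
  (forall (P dP : C -> 'rV[C]_(s.+1)),
     is_deriv_rV (fun z => `|z| < 1) P dP ->
     (forall z, `|z| < 1 -> dP z *m Vmat s p abar z = P z *m Umat s lam mu nu pa tpa ta0 thb tht z) ->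
     forall z, `|z| < 1 ->
       dP z *m Vhat s p abar z = P z *m Uhat s lam mu nu pa tpa ta0 thb tht z
       /\
       (\sum_(i < s) dP z 0 (widen_ord (leqnSn s) i) + abar * dP z 0 ord_max
        = \sum_(i < s) (lam / nu * tpa + i%:R * tht * (mu / nu)) * P z 0 (widen_ord (leqnSn s) i)
          + (lam * ta0 / nu + s%:R * tht * (mu / nu)) * P z 0 ord_max)
       /\
       (forall j : 'I_(s.+1), (j < s)%N ->
          (dP z *m Vmat s p abar z) 0 j = (P z *m Umat s lam mu nu pa tpa ta0 thb tht z) 0 j)).
Proof.
have eq_hat z := @VU_eq_hat C s lam mu nu pa tpa ta0 p abar thb tht hpatpa z.
split=> [Om _ notOm1 P dP _ | P dP _ PVU z z_disc].
  have ne1 z : Om z -> z != 1 by move=> Omz; apply: contraPneq notOm1 => <-.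
  by split=> E z Omz; apply/(eq_hat z _ _ (ne1 z Omz))/E.
have z1 : z != 1 by apply: contraTneq z_disc => ->; rewrite normr1 ltxx.
have hatVU := (eq_hat z _ _ z1).1 (PVU z z_disc).
split=> //; split=> [|j _]; last by rewrite PVU.
by have := congr1 (fun M : 'rV[C]_s.+1 => M 0 ord_max) hatVU; rewrite mulmx_Vhat_last mulmx_Uhat_last.
Qed.
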